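(* If $\Lambda=T_1\sqcup\cdots\sqcup T_m$ is a partition of $\Lambda$ into pairwise disjoint nonempty tilings $T_1,\dots,T_m$, then $m\le n-2$.
   Context: Fix an integer $n\ge 3$ and write $[n]=\{1,\dots,n\}$. Let $\Lambda$ be the set of 3-element subsets of $[n]$; a triple $\{i,j,k\}$ with $i<j<k$ is written $ijk$. For a 4-element subset $F=\{i<j<k<l\}$ of $[n]$, the stick of $F$ is the sequence $(ijk,\ ijl,\ ikl,\ jkl)$. A tiling (the inversion set of a rhombus tiling of the zonogon $Z(n;2)$) is a subset $T\subseteq\Lambda$ such that for every 4-element $F\subseteq[n]$, $T\cap\mathrm{stick}(F)$ is an initial segment or a final segment of the stick (empty set and whole stick allowed). *)

From mathcomp Require Import all_boot all_order.
Set Implicit Arguments. Unset Strict Implicit. Unset Printing Implicit Defensive.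

(* Ground set [n] is modelled by 'I_n = {0,...,n-1}, with its natural order. *)

Definition Lambda (n : nat) : {set {set 'I_n}} := [set A : {set 'I_n} | #|A| == 3].

Definition sorted_elems (n : nat) (F : {set 'I_n}) : seq 'I_n :=
  sort (fun a b : 'I_n => (a <= b)%N) (enum F).

(* For F = {i<j<k<l}, stick F = (ijk, ijl, ikl, jkl),
   i.e. (F\{l}, F\{k}, F\{j}, F\{i}). *)
Definition stick (n : nat) (F : {set 'I_n}) : seq {set 'I_n} :=
  [seq F :\ x | x <- rev (sorted_elems F)].

Definition is_initial (s : seq bool) : Prop :=
  exists k, s = nseq k true ++ nseq (size s - k) false.
Definition is_final (s : seq bool) : Prop :=
  exists k, s = nseq k false ++ nseq (size s - k) true.

Definition tiling (n : nat) (T : {set {set 'I_n}}) : Prop :=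
  T \subset Lambda n /\
  forall F : {set 'I_n}, #|F| = 4 ->
    let s := [seq (A \in T) | A <- stick F] in is_initial s \/ is_final s.

From mathcomp Require Import all_boot all_order.
From mathcomp Require Import zify.

(* Every nonempty tiling T contains a "window" {c-2, c-1, c} of three
   consecutive elements.  Indeed, pick {a<b<c} in T with c minimal.  If
   b < c-1, the stick of {a, b, c-1, c} starts with {a, b, c-1}, which is not
   in T by minimality, and contains {a, b, c} \in T, so it is a final segment
   and {b, c-1, c} \in T; the stick of {a, c-2, c-1, c} then moves a up to c-2
   in the same way.  Disjoint tilings thus get distinct windows, and there are
   only n-2 windows. *)

Set Implicit Arguments. Unset Strict Implicit. Unset Printing Implicit Defensive.

Section Sticks.
Variable n : nat.
Implicit Types (a b c d : 'I_n) (F t : {set 'I_n}) (T : {set {set 'I_n}}).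

Let ord_leq : rel 'I_n := fun x y => (x <= y)%N.

Let ord_leq_total : total ord_leq. Proof. by move=> x y; apply: leq_total. Qed.
Let ord_leq_trans : transitive ord_leq. Proof. by move=> x y z; apply: leq_trans. Qed.
Let ord_leq_anti : antisymmetric ord_leq.
Proof. by move=> x y xy; apply/val_inj/eqP; rewrite eqn_leq. Qed.

Lemma perm_sorted_elems F : perm_eq (sorted_elems F) (enum F).
Proof. by apply/permPl; apply: perm_sort. Qed.

Lemma sorted_elemsE F s : sorted ord_leq s -> perm_eq s (enum F) -> sorted_elems F = s.
Proof.
move=> s_sorted s_perm; apply: (sorted_eq ord_leq_trans ord_leq_anti).
- exact: sort_sorted.
- exact: s_sorted.
- by rewrite (perm_trans (perm_sorted_elems F)) // perm_sym.
Qed.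

Lemma perm_enum_set4 a b c d : (a < b < c)%N -> (c < d)%N ->
  perm_eq (enum [set a; b; c; d]) [:: a; b; c; d].
Proof.
move=> /andP[ab bc] cd; apply: uniq_perm; first exact: enum_uniq.
  by rewrite /= !inE -!val_eqE /=; lia.
by move=> z; rewrite mem_enum !inE -!orbA.
Qed.

Lemma card_set4 a b c d : (a < b < c)%N -> (c < d)%N -> #|[set a; b; c; d]| = 4.
Proof. by move=> abc cd; rewrite cardE (perm_size (perm_enum_set4 abc cd)). Qed.

Lemma stick_set4 a b c d : (a < b < c)%N -> (c < d)%N ->
  stick [set a; b; c; d] =
    [:: [set a; b; c]; [set a; b; d]; [set a; c; d]; [set b; c; d]].
Proof.
move=> abc cd; rewrite /stick (@sorted_elemsE _ [:: a; b; c; d]); last first.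
- by rewrite perm_sym perm_enum_set4.
- by move: abc => /andP[ab bc]; rewrite /= /ord_leq; lia.
move: abc => /andP[ab bc] /=.
by congr [:: _; _; _; _]; apply/setP => z; rewrite !inE -!val_eqE /=; lia.
Qed.

Lemma segment_false_head (x y z : bool) :
  is_initial [:: false; x; y; z] \/ is_final [:: false; x; y; z] -> x || y -> z.
Proof. by case=> [][[|[|[|[|[|k]]]]]]; case: x; case: y; case: z. Qed.

Lemma tiling_stick_last T a b c d : tiling T -> (a < b < c)%N -> (c < d)%N ->
  [set a; b; c] \notin T -> ([set a; b; d] \in T) || ([set a; c; d] \in T) ->
  [set b; c; d] \in T.
Proof.
move=> [_ tilingT] abc cd abcNT.
have := tilingT _ (card_set4 abc cd); rewrite stick_set4 //= (negbTE abcNT).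
exact: segment_false_head.
Qed.

Lemma card3_sorted t : #|t| = 3 ->
  exists a b c, (a < b < c)%N /\ t = [set a; b; c].
Proof.
move=> t3; have s_perm := perm_sorted_elems t.
have s_sorted : sorted ord_leq (sorted_elems t) by apply: sort_sorted.
have s_uniq : uniq (sorted_elems t) by rewrite (perm_uniq s_perm) enum_uniq.
have := perm_size s_perm; rewrite -cardE t3.
case: (sorted_elems t) s_perm s_sorted s_uniq => [|a [|b [|c [|]]]] //= s_perm.
move=> /and3P[ab bc _] /and3P[]; rewrite !inE -!val_eqE /= => /norP[abN _] bcN _ _.
exists a, b, c; split; first by move: ab bc abN bcN; rewrite /ord_leq; lia.
by apply/setP => x; rewrite -mem_enum -(perm_mem s_perm) !inE -!orbA.
Qed.

Definition window (k : nat) : {set 'I_n} := [set x : 'I_n | (k <= x <= k.+2)%N].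

Lemma exists_ord_subn c k : exists c' : 'I_n, c' = c - k :> nat.
Proof. by exists (Ordinal (leq_ltn_trans (leq_subr k c) (ltn_ord c))). Qed.

Lemma tiling_window_at_min_top T a b c : tiling T -> (a < b < c)%N ->
  [set a; b; c] \in T ->
  (forall a' b' c', (a' < b' < c')%N -> [set a'; b'; c'] \in T -> c <= c')%N ->
  window (c - 2) \in T.
Proof.
move=> tilingT /andP[ab bc] abcT c_min.
have [c1 c1E] := exists_ord_subn c 1; have [c2 c2E] := exists_ord_subn c 2.
have notT (x y z : 'I_n) : (x < y < z)%N -> (z < c)%N -> [set x; y; z] \notin T.
  by move=> xyz zc; apply/negP => /(c_min _ _ _ xyz); lia.
have [a' a'c1 a'c1cT] : exists2 a' : 'I_n, (a' < c1)%N & [set a'; c1; c] \in T.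
  have [b_c1 | b_c1] := eqVneq (b : nat) c1; first by rewrite -(ord_inj b_c1); exists a.
  exists b; first lia.
  by apply: (tiling_stick_last (a := a)) => //; rewrite ?abcT ?notT //=; lia.
have c2c1cT : [set c2; c1; c] \in T.
  have [a'_c2 | a'_c2] := eqVneq (a' : nat) c2; first by rewrite -(ord_inj a'_c2).
  apply: (tiling_stick_last (a := a')) => //; rewrite ?a'c1cT ?orbT ?notT //=; lia.
suff -> : window (c - 2) = [set c2; c1; c] by [].
by apply/setP => x; rewrite !inE -!val_eqE /=; lia.
Qed.

Lemma tiling_has_window T : tiling T -> T != set0 ->
  exists k : 'I_(n - 2), window k \in T.
Proof.
move=> tilingT /set0Pn[t tT].
pose P (k : nat) := [exists a : 'I_n, exists b : 'I_n, exists c : 'I_n,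
  [&& (a < b < c)%N, c == k :> nat & [set a; b; c] \in T]].
have P_top (a b c : 'I_n) : (a < b < c)%N -> [set a; b; c] \in T -> P c.
  move=> abc abcT; apply/existsP; exists a; apply/existsP; exists b.
  by apply/existsP; exists c; rewrite abc eqxx abcT.
have exP : exists k, P k.
  have /card3_sorted[a [b [c [abc tE]]]] : #|t| = 3.
    by move: (subsetP tilingT.1 _ tT); rewrite inE => /eqP.
  by exists c; apply: (P_top a b); rewrite -?tE.
case: (ex_minnP exP) => c0 /existsP[a /existsP[b /existsP[c]]].
move=> /and3P[abc /eqP <- abcT] c_min.
have k_lt : (c - 2 < n - 2)%N by have := ltn_ord c; move: abc; lia.
exists (Ordinal k_lt); apply: (tiling_window_at_min_top tilingT abc abcT).
by move=> a' b' c' abc' abcT'; apply/c_min/(P_top a' b').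
Qed.

End Sticks.

Theorem mainTheorem13 (n m : nat) (T : 'I_m -> {set {set 'I_n}}) :
  (3 <= n)%N ->
  (forall i, tiling (T i)) ->
  (forall i, T i != set0) ->
  (forall i j, i != j -> [disjoint T i & T j]) ->
  \bigcup_(i < m) T i = Lambda n ->
  (m <= n - 2)%N.
Proof.
move=> _ tilingT T_neq0 T_disj _.
have /fin_all_exists[k kT] := fun i => tiling_has_window (tilingT i) (T_neq0 i).
have k_inj : injective k.
  move=> i j kij; apply/eqP; apply: contraT => /T_disj /disjointFr.
  by move=> /(_ _ (kT i)); rewrite kij kT.
by have := leq_card k k_inj; rewrite !card_ord.
Qed.
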